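(* For every LTL formula $\varphi$ in positive normal form, the cardinality of the set of partial derivative descendants $\Delta_{\Sigma^*}(\varphi)$ is bounded by $O(2^n)$, where $n$ is the size of $\varphi$.
   Context: Fix a finite set $AP$, a finite alphabet $\Sigma$ and $I:\Sigma\to\mathcal P(AP)$. LTL formulae in positive normal form: $\varphi,\psi ::= p \mid \neg p \mid \mathbf{tt} \mid \mathbf{ff} \mid \varphi\wedge\psi \mid \varphi\vee\psi \mid \mathbf{X}\varphi \mid \varphi\,\mathbf{U}\,\psi \mid \varphi\,\mathbf{R}\,\psi$; $\mathbf F\varphi=\mathbf{tt}\,\mathbf U\varphi$, $\mathbf G\varphi=\mathbf{ff}\,\mathbf R\varphi$. The size of a formula is the number of literals, temporal operators and Boolean operators in it. A temporal formula is one whose outermost operator is not $\wedge$ or $\vee$; conjunctions of temporal formulae are normalised modulo associativity, commutativity and idempotence w.r.t. a fixed total order ($\mathbf{tt}$ the empty conjunction). $\mathrm{SIMP}(\varphi\wedge\psi)=\{\varphi'\wedge\psi'\mid\varphi'\in\mathrm{SIMP}(\varphi),\psi'\in\mathrm{SIMP}(\psi)\}$, $\mathrm{SIMP}(\varphi\vee\psi)=\mathrm{SIMP}(\varphi)\cup\mathrm{SIMP}(\psi)$, $\mathrm{SIMP}(\varphi)=\{\varphi\}$ for temporal $\varphi$. For a literal $\ell$ ($p$ or $\neg p$): $x\models p$ iff $p\in I(x)$, $x\models\neg p$ iff $p\notin I(x)$. Direct partial derivative: $\Delta_x(\mathbf{tt})=\{\mathbf{tt}\}$; $\Delta_x(\mathbf{ff})=\emptyset$;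 $\Delta_x(\ell)=\{\mathbf{tt}\}$ if $x\models\ell$, else $\emptyset$; $\Delta_x(\varphi\vee\psi)=\Delta_x(\varphi)\cup\Delta_x(\psi)$; $\Delta_x(\varphi\wedge\psi)=\{\varphi'\wedge\psi'\mid\varphi'\in\Delta_x(\varphi),\psi'\in\Delta_x(\psi)\}$; $\Delta_x(\mathbf X\varphi)=\mathrm{SIMP}(\varphi)$; $\Delta_x(\varphi\mathbf U\psi)=\Delta_x(\psi)\cup\{\varphi'\wedge(\varphi\mathbf U\psi)\mid\varphi'\in\Delta_x(\varphi)\}$; $\Delta_x(\varphi\mathbf R\psi)=\{\varphi'\wedge\psi'\mid\varphi'\in\Delta_x(\varphi),\psi'\in\Delta_x(\psi)\}\cup\{\psi'\wedge(\varphi\mathbf R\psi)\mid\psi'\in\Delta_x(\psi)\}$; $\Delta_x(\mathbf F\varphi)=\Delta_x(\varphi)\cup\{\mathbf F\varphi\}$; $\Delta_x(\mathbf G\varphi)=\{\varphi'\wedge\mathbf G\varphi\mid\varphi'\in\Delta_x(\varphi)\}$. For words: $\Delta_\varepsilon(\varphi)=\{\varphi\}$, $\Delta_{xw}(\varphi)=\bigcup_{\varphi'\in\Delta_x(\varphi)}\Delta_w(\varphi')$, and $\Delta_{\Sigma^*}(\varphi)=\bigcup_{w\in\Sigma^*}\Delta_w(\varphi)$. *)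

From HB Require Import structures.
From mathcomp Require Import all_boot.
Set Implicit Arguments. Unset Strict Implicit. Unset Printing Implicit Defensive.

Section LTL.
Variable AP : finType.

(* LTL formulae in positive normal form.
   FLit true p = p,  FLit false p = ¬p.
   F φ := FU FTt φ,  G φ := FR FFf φ (derived, as in the paper). *)
Inductive form : Type :=
| FLit of bool & AP
| FTt
| FFf
| FAnd of form & form
| FOr of form & form
| FX of form
| FU of form & form
| FR of form & form.

Definition FF (f : form) := FU FTt f.
Definition FG (f : form) := FR FFf f.

(* countType structure (via a GenTree encoding); used only to get a
   fixed total order on formulae. *)
Fixpoint enc (f : form) : GenTree.tree (bool * AP) :=
  match f with
  | FLit b p => GenTree.Leaf (b, p)
  | FTt => GenTree.Node 0 [::]
  | FFf => GenTree.Node 1 [::]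
  | FAnd a b => GenTree.Node 2 [:: enc a; enc b]
  | FOr a b => GenTree.Node 3 [:: enc a; enc b]
  | FX a => GenTree.Node 4 [:: enc a]
  | FU a b => GenTree.Node 5 [:: enc a; enc b]
  | FR a b => GenTree.Node 6 [:: enc a; enc b]
  end.

Fixpoint dec (t : GenTree.tree (bool * AP)) : option form :=
  match t with
  | GenTree.Leaf (b, p) => Some (FLit b p)
  | GenTree.Node 0 [::] => Some FTt
  | GenTree.Node 1 [::] => Some FFf
  | GenTree.Node 2 [:: a; b] =>
      if (dec a, dec b) is (Some x, Some y) then Some (FAnd x y) else None
  | GenTree.Node 3 [:: a; b] =>
      if (dec a, dec b) is (Some x, Some y) then Some (FOr x y) else None
  | GenTree.Node 4 [:: a] => if dec a is Some x then Some (FX x) else None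
  | GenTree.Node 5 [:: a; b] =>
      if (dec a, dec b) is (Some x, Some y) then Some (FU x y) else None
  | GenTree.Node 6 [:: a; b] =>
      if (dec a, dec b) is (Some x, Some y) then Some (FR x y) else None
  | _ => None
  end.

Lemma encK : pcancel enc dec.
Proof. by elim => //= [a -> b ->|a -> b ->|a ->|a -> b ->|a -> b ->]. Qed.

HB.instance Definition _ := Countable.copy form (pcan_type encK).

Fixpoint fsize (f : form) : nat :=
  match f with
  | FLit _ _ => 1
  | FTt | FFf => 0
  | FAnd a b | FOr a b | FU a b | FR a b => (fsize a + fsize b).+1
  | FX a => (fsize a).+1
  end.

Definition fle (f g : form) : bool := pickle f <= pickle g.

Fixpoint conjuncts (f : form) : seq form :=
  match f with
  | FTt => [::]
  | FAnd a b => conjuncts a ++ conjuncts b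
  | _ => [:: f]
  end.

Fixpoint build (s : seq form) : form :=
  match s with
  | [::] => FTt
  | [:: a] => a
  | a :: s' => FAnd a (build s')
  end.

(* Conjunction normalised modulo associativity, commutativity and
   idempotence w.r.t. the fixed total order fle. *)
Definition mkAnd (f g : form) : form :=
  build (sort fle (undup (conjuncts f ++ conjuncts g))).

Fixpoint SIMP (f : form) : seq form :=
  match f with
  | FAnd a b => [seq mkAnd x y | x <- SIMP a, y <- SIMP b]
  | FOr a b => SIMP a ++ SIMP b
  | _ => [:: f]
  end.

Variable Sigma : finType.
Variable I : Sigma -> {set AP}.

(* Direct partial derivative Δ_x (as a finite list, read as a set). *)
Fixpoint deriv (x : Sigma) (f : form) : seq form :=
  match f with
  | FTt => [:: FTt]
  | FFf => [::]
  | FLit b p => if (p \in I x) == b then [:: FTt] else [::]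
  | FOr a b => deriv x a ++ deriv x b
  | FAnd a b => [seq mkAnd a' b' | a' <- deriv x a, b' <- deriv x b]
  | FX a => SIMP a
  | FU a b => deriv x b ++ [seq mkAnd a' (FU a b) | a' <- deriv x a]
  | FR a b => [seq mkAnd a' b' | a' <- deriv x a, b' <- deriv x b]
              ++ [seq mkAnd b' (FR a b) | b' <- deriv x b]
  end.

Fixpoint derivw (w : seq Sigma) (f : form) : seq form :=
  match w with
  | [::] => [:: f]
  | x :: w' => flatten [seq derivw w' g | g <- deriv x f]
  end.

Definition desc (f g : form) : Prop := exists w : seq Sigma, g \in derivw w f.

End LTL.

From HB Require Import structures.
From mathcomp Require Import all_boot.
From mathcomp Require Import zify.
From Stdlib Require Import ClassicalEpsilon.

Set Implicit Arguments.
Unset Strict Implicit.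
Unset Printing Implicit Defensive.

(* Let K be the U/R-subformulas of phi together with the temporal components
   of the bodies of its X-subformulas: K has at most |phi| members and
   contains the list built in the same way from any of its members.  Every
   derivative of a normalised conjunction of members of K is again one, so a
   descendant of phi other than phi itself is determined by the subset of K
   it conjoins, which leaves at most 1 + 2^|phi| descendants. *)

Section Descendants.
Variable AP : finType.
Local Notation form := (form AP).

Definition conj_atom (f : form) : bool :=
  match f with FAnd _ _ | FTt => false | _ => true end.

Lemma conjuncts_atom (f : form) : conj_atom f -> conjuncts f = [:: f].
Proof. by case: f. Qed.

Lemma conjuncts_build (s : seq form) : all conj_atom s -> conjuncts (build s) = s.
Proof.
elim: s => [|a [|b s] IHs] //=; first by rewrite andbT => /conjuncts_atom.
by case/andP=> /conjuncts_atom -> /IHs ->.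
Qed.

Lemma fle_total : total (@fle AP).
Proof. by move=> f g; apply: leq_total. Qed.

Lemma fle_trans : transitive (@fle AP).
Proof. by move=> g f h; apply: leq_trans. Qed.

Lemma fle_anti : antisymmetric (@fle AP).
Proof. by move=> f g fg; apply: (pcan_inj (@pickleK _)); apply/eqP; rewrite eqn_leq. Qed.

Definition nconj (l : seq form) : form := build (sort (@fle AP) (undup l)).

Lemma eq_nconj (l1 l2 : seq form) : l1 =i l2 -> nconj l1 = nconj l2.
Proof.
move=> eq_l; rewrite /nconj; congr build.
apply/(perm_sortP fle_total fle_trans fle_anti).
by apply: uniq_perm; rewrite ?undup_uniq // => f; rewrite !mem_undup eq_l.
Qed.

Lemma conjuncts_nconj (l : seq form) : all conj_atom l -> conjuncts (nconj l) =i l.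
Proof.
move=> atom_l; rewrite /nconj conjuncts_build => [f|]; first by rewrite mem_sort mem_undup.
by apply/allP=> f; rewrite mem_sort mem_undup; apply: (allP atom_l).
Qed.

Lemma mkAnd_nconj (l1 l2 : seq form) : all conj_atom l1 -> all conj_atom l2 ->
  mkAnd (nconj l1) (nconj l2) = nconj (l1 ++ l2).
Proof.
move=> atom_l1 atom_l2; apply: eq_nconj => f.
by rewrite !mem_cat (conjuncts_nconj atom_l1) (conjuncts_nconj atom_l2).
Qed.

Definition conj_over (K : seq form) (g : form) : Prop :=
  exists l, [/\ all conj_atom l, all (mem K) l & g = nconj l].

Lemma conj_over_tt (K : seq form) : conj_over K (FTt AP).
Proof. by exists [::]. Qed.

Lemma conj_over_atom (K : seq form) (a : form) :
  conj_atom a -> a \in K -> conj_over K a.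
Proof. by move=> atom_a aK; exists [:: a]; rewrite /= atom_a aK. Qed.

Lemma conj_over_mkAnd (K : seq form) (g h : form) :
  conj_over K g -> conj_over K h -> conj_over K (mkAnd g h).
Proof.
move=> [l1 [atom_l1 l1K ->]] [l2 [atom_l2 l2K ->]].
by exists (l1 ++ l2); rewrite !all_cat atom_l1 l1K mkAnd_nconj.
Qed.

Lemma sub_conj_over (K K' : seq form) (g : form) :
  {subset K <= K'} -> conj_over K g -> conj_over K' g.
Proof. by move=> sKK' [l [? lK ->]]; exists l; split=> //; apply: sub_all lK. Qed.

Lemma conj_over_catl (K K' : seq form) (g : form) : conj_over K g -> conj_over (K ++ K') g.
Proof. by apply: sub_conj_over => f fK; rewrite mem_cat fK. Qed.

Lemma conj_over_catr (K K' : seq form) (g : form) : conj_over K' g -> conj_over (K ++ K') g.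
Proof. by apply: sub_conj_over => f fK'; rewrite mem_cat fK' orbT. Qed.

Lemma conj_over_image (K : seq form) (g : form) : conj_over K g ->
  g \in [seq nconj (mask t K) | t : (size K).-tuple bool].
Proof.
move=> [l [_ lK ->]].
have -> : nconj l = nconj (mask (map (mem l) K) K).
  by apply: eq_nconj => f; rewrite -filter_mask mem_filter andb_idr // => /(allP lK).
exact: (map_f _ (mem_enum _ (map_tuple (mem l) (in_tuple K)))).
Qed.

(* [tt] is the empty conjunction, so unlike [ff] it has no component. *)
Fixpoint tcomps (f : form) : seq form :=
  match f with
  | FAnd a b | FOr a b => tcomps a ++ tcomps b
  | FTt => [::]
  | _ => [:: f]
  end.

Fixpoint tclosure (f : form) : seq form :=
  match f with
  | FLit _ _ | FTt | FFf => [::]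
  | FAnd a b | FOr a b => tclosure a ++ tclosure b
  | FX a => tcomps a ++ tclosure a
  | FU a b | FR a b => f :: tclosure a ++ tclosure b
  end.

Lemma SIMP_conj_over (a g : form) : g \in SIMP a -> conj_over (tcomps a) g.
Proof.
elim: a g => [b p|||a IHa b IHb|a IHa b IHb|a _|a _ b _|a _ b _] g /=;
  try by rewrite inE => /eqP->; apply: conj_over_atom; rewrite ?mem_head.
- by rewrite inE => /eqP->; apply: conj_over_tt.
- case/allpairsP=> [[y z] [/= /IHa ya /IHb zb ->]].
  by apply: conj_over_mkAnd; [apply: conj_over_catl|apply: conj_over_catr].
- by rewrite mem_cat => /orP[/IHa/conj_over_catl|/IHb/conj_over_catr].
Qed.

Lemma tcomps_tclosure (a t : form) :
  t \in tcomps a -> {subset tclosure t <= tclosure a}.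
Proof.
elim: a => [b p|||a IHa b IHb|a IHa b IHb|a _|a _ b _|a _ b _] //=; try by rewrite inE => /eqP->.
- by rewrite mem_cat => /orP[/IHa|/IHb] sub f /sub; rewrite mem_cat => ->; rewrite ?orbT.
- by rewrite mem_cat => /orP[/IHa|/IHb] sub f /sub; rewrite mem_cat => ->; rewrite ?orbT.
Qed.

Lemma tclosure_closed (f t : form) :
  t \in tclosure f -> {subset tclosure t <= tclosure f}.
Proof.
elim: f => //= [a IHa b IHb|a IHa b IHb|a IHa|a IHa b IHb|a IHa b IHb].
- by rewrite mem_cat => /orP[/IHa|/IHb] sub g /sub; rewrite mem_cat => ->; rewrite ?orbT.
- by rewrite mem_cat => /orP[/IHa|/IHb] sub g /sub; rewrite mem_cat => ->; rewrite ?orbT.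
- by rewrite mem_cat => /orP[/tcomps_tclosure|/IHa] sub g /sub; rewrite mem_cat => ->; rewrite ?orbT.
- by rewrite inE mem_cat => /or3P[/eqP-> //|/IHa|/IHb] sub g /sub;
    rewrite inE mem_cat => ->; rewrite ?orbT.
- by rewrite inE mem_cat => /or3P[/eqP-> //|/IHa|/IHb] sub g /sub;
    rewrite inE mem_cat => ->; rewrite ?orbT.
Qed.

Lemma size_tclosure_tcomps (f : form) :
  size (tclosure f) <= fsize f /\ size (tclosure f) + size (tcomps f) <= (fsize f).+1.
Proof.
elim: f => [||| a [? ?] b [? ?] | a [? ?] b [? ?] | a [? ?] | a [? ?] b [? ?]
  | a [? ?] b [? ?]] /=; rewrite ?size_cat /=; lia.
Qed.

Lemma tclosure_build (K s : seq form) : {in s, forall a, all (mem K) (tclosure a)} ->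
  all (mem K) (tclosure (build s)).
Proof.
elim: s => [|a [|b s] IHs] //= closedK; first by apply: closedK; rewrite mem_head.
rewrite all_cat closedK ?mem_head //; apply: IHs => c cs.
by apply: closedK; rewrite inE cs orbT.
Qed.

Variables (Sigma : finType) (I : Sigma -> {set AP}).

Lemma deriv_conj_over (K : seq form) (x : Sigma) (f g : form) :
  all (mem K) (tclosure f) -> g \in deriv I x f -> conj_over K g.
Proof.
elim: f g => [b p|||a IHa b IHb|a IHa b IHb|a _|a IHa b IHb|a IHa b IHb] g /=.
- by case: ifP => _ //; rewrite inE => _ /eqP->; apply: conj_over_tt.
- by rewrite inE => _ /eqP->; apply: conj_over_tt.
- by [].
- rewrite all_cat => /andP[aK bK] /allpairsP[[y z] [/= ya zb ->]].
  by apply: conj_over_mkAnd; [apply: IHa ya|apply: IHb zb].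
- by rewrite all_cat mem_cat => /andP[aK bK] /orP[/IHa|/IHb]; apply.
- rewrite all_cat => /andP[aK _] /SIMP_conj_over.
  by apply: sub_conj_over => t /(allP aK).
- case/andP=> UK; rewrite all_cat mem_cat => /andP[aK bK] /orP[gb|/mapP[y ya ->]].
    exact: IHb gb.
  by apply: conj_over_mkAnd; [apply: IHa ya|apply: conj_over_atom].
- case/andP=> RK; rewrite all_cat mem_cat => /andP[aK bK].
  case/orP=> [/allpairsP[[y z] [/= ya zb ->]]|/mapP[z zb ->]].
    by apply: conj_over_mkAnd; [apply: IHa ya|apply: IHb zb].
  by apply: conj_over_mkAnd; [apply: IHb zb|apply: conj_over_atom].
Qed.

Section ClosedComponents.
Variable K : seq form.
Hypothesis closedK : {in K, forall a, all (mem K) (tclosure a)}.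

Lemma conj_over_deriv (x : Sigma) (h g : form) :
  conj_over K h -> g \in deriv I x h -> conj_over K g.
Proof.
move=> [l [_ lK ->]]; apply: deriv_conj_over; apply: tclosure_build => a.
by rewrite mem_sort mem_undup => /(allP lK); apply: closedK.
Qed.

Lemma conj_over_derivw (w : seq Sigma) (h g : form) :
  conj_over K h -> g \in derivw I w h -> conj_over K g.
Proof.
elim: w h => [|x w IHw] h hK /=; first by rewrite inE => /eqP->.
by case/flattenP=> _ /mapP[h' /(conj_over_deriv hK) h'K ->]; apply: IHw.
Qed.

End ClosedComponents.

Lemma desc_conj_over (phi g : form) :
  desc I phi g -> g = phi \/ conj_over (tclosure phi) g.
Proof.
case=> [[|x w]] /=; first by rewrite inE => /eqP; left.
case/flattenP=> _ /mapP[h hphi ->] gh; right.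
apply: conj_over_derivw gh; first by move=> a /tclosure_closed sub; apply/allP.
exact: deriv_conj_over (allss _) hphi.
Qed.

End Descendants.

Lemma uniq_seq_of_pred (T : eqType) (P : T -> Prop) (L : seq T) :
  (forall x, P x -> x \in L) ->
  exists s, [/\ uniq s, forall x, P x <-> x \in s & size s <= size L].
Proof.
move=> PL; pose p x : bool := if excluded_middle_informative (P x) then true else false.
have pP x : p x <-> P x by rewrite /p; case: excluded_middle_informative.
exists (undup (filter p L)); split; first exact: undup_uniq.
  move=> x; rewrite mem_undup mem_filter; split=> [Px|/andP[/pP]//].
  by rewrite (PL _ Px) andbT; apply/pP.
by rewrite (leq_trans (size_undup _)) ?size_filter ?count_size.
Qed.

Theorem lemma10 (AP Sigma : finType) (I : Sigma -> {set AP}) :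
  exists C : nat, forall phi : form AP,
    exists s : seq (form AP),
      [/\ uniq s,
          (forall psi : form AP, desc I phi psi <-> psi \in s)
        & size s <= C * 2 ^ fsize phi].
Proof.
exists 2 => phi; set K := tclosure phi.
have descL psi : desc I phi psi ->
    psi \in phi :: [seq nconj (mask t K) | t : (size K).-tuple bool].
  by case/desc_conj_over=> [->|/conj_over_image psiL]; rewrite inE ?eqxx ?psiL ?orbT.
have [s [s_uniq descs size_s]] := uniq_seq_of_pred descL.
exists s; split=> //; apply: (leq_trans size_s).
rewrite /= size_map -cardE card_tuple card_bool.
have [sizeK _] := size_tclosure_tcomps phi.
have : 2 ^ size K <= 2 ^ fsize phi by apply: leq_pexp2l.
have : 0 < 2 ^ fsize phi by rewrite expn_gt0.
lia.
Qed.
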